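(* Let $\mathcal{C}$ be a category equipped with a faithful functor $Q:\mathcal{C}\to\mathbf{Set}$, and let $\Phi$ be a quasi-inner automorphism of $\mathcal{C}$, witnessed by a natural transformation $(\sigma_A:A\to\Phi(A))_{A\in\mathrm{Ob}\,\mathcal{C}}$ from the identity functor to $\Phi$ all of whose components are bimorphisms. If $\mu:A\to B$ and $\nu:\Phi(A)\to\Phi(B)$ are morphisms of $\mathcal{C}$ with $\sigma_B\circ\mu=\nu\circ\sigma_A$, then $\nu=\Phi(\mu)$. Consequently, for every morphism $\mu:A\to B$, $\Phi(\mu)$ is the unique morphism $\nu:\Phi(A)\to\Phi(B)$ such that $Q(\sigma_B)\circ Q(\mu)\circ (Q(\sigma_A))^{-1}\subseteq Q(\nu)$ (inclusion of relations), i.e. such that $Q(\nu)(Q(\sigma_A)(a))=Q(\sigma_B)(Q(\mu)(a))$ for all $a\in Q(A)$.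
   Context: A bimorphism is a morphism that is both a monomorphism and an epimorphism. An automorphism $\Phi$ of $\mathcal{C}$ is called quasi-inner if there exists a family of bimorphisms $\sigma_A:A\to\Phi(A)$, $A\in\mathrm{Ob}\,\mathcal{C}$, such that $\sigma_B\circ\mu=\Phi(\mu)\circ\sigma_A$ for every morphism $\mu:A\to B$ of $\mathcal{C}$. *)

Set Implicit Arguments.
Unset Strict Implicit.

Record Category := {
  Obj :> Type;
  Hom : Obj -> Obj -> Type;
  comp : forall A B C, Hom B C -> Hom A B -> Hom A C;
  idm : forall A, Hom A A;
  comp_assoc : forall A B C D (h : Hom C D) (g : Hom B C) (f : Hom A B),
      comp h (comp g f) = comp (comp h g) f;
  comp_id_l : forall A B (f : Hom A B), comp (idm B) f = f;
  comp_id_r : forall A B (f : Hom A B), comp f (idm A) = f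
}.
Arguments Hom {c} _ _.
Arguments comp {c A B C} _ _.
Arguments idm {c} A.

Record Functor (C D : Category) := {
  fobj :> C -> D;
  fmap : forall A B : C, Hom A B -> Hom (fobj A) (fobj B);
  fmap_id : forall A : C, fmap (idm A) = idm (fobj A);
  fmap_comp : forall (A B E : C) (g : Hom B E) (f : Hom A B),
      fmap (comp g f) = comp (fmap g) (fmap f)
}.
Arguments fmap {C D} f0 {A B} _ : rename.

Record SetFunctor (C : Category) := {
  sobj :> C -> Type;
  smap : forall A B : C, Hom A B -> sobj A -> sobj B;
  smap_id : forall (A : C) (x : sobj A), smap (idm A) x = x;
  smap_comp : forall (A B E : C) (g : Hom B E) (f : Hom A B) (x : sobj A),
      smap (comp g f) x = smap g (smap f x)
}.
Arguments smap {C} s {A B} _ _.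

(* Faithfulness: injective on each hom-set (maps of sets are equal iff
   pointwise equal). *)
Definition faithful (C : Category) (Q : SetFunctor C) : Prop :=
  forall (A B : C) (f g : Hom A B),
    (forall x, smap Q f x = smap Q g x) -> f = g.

Definition monomorphism (C : Category) (A B : C) (f : Hom A B) : Prop :=
  forall (X : C) (g h : Hom X A), comp f g = comp f h -> g = h.

Definition epimorphism (C : Category) (A B : C) (f : Hom A B) : Prop :=
  forall (X : C) (g h : Hom B X), comp g f = comp h f -> g = h.

Definition bimorphism (C : Category) (A B : C) (f : Hom A B) : Prop :=
  monomorphism f /\ epimorphism f.

Definition bijective_map (X Y : Type) (f : X -> Y) : Prop :=
  exists g : Y -> X, (forall x, g (f x) = x) /\ (forall y, f (g y) = y).

Definition automorphism (C : Category) (F : Functor C C) : Prop :=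
  bijective_map (fobj F) /\
  forall A B : C, bijective_map (@fmap C C F A B).

Definition nat_trans_id (C : Category) (F : Functor C C)
  (sigma : forall A : C, Hom A (F A)) : Prop :=
  forall (A B : C) (mu : Hom A B), comp (sigma B) mu = comp (fmap F mu) (sigma A).


(* Naturality makes [fmap Phi mu] one solution [nu] of
   [sigma B ∘ mu = nu ∘ sigma A], and since [sigma A] is an epimorphism it is
   the only one; faithfulness of [Q] turns the pointwise condition on [Q nu]
   into that equation. *)

Lemma faithful_comp_eq {C : Category} {Q : SetFunctor C} (HQ : faithful Q)
  (A B B' D : C) (f : Hom A B) (g : Hom B D) (h : Hom A B') (k : Hom B' D) :
  (forall x, smap Q g (smap Q f x) = smap Q k (smap Q h x)) ->
  comp g f = comp k h.
Proof.
  intros Hpt. apply HQ. intros x. rewrite !smap_comp. apply Hpt.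
Qed.

Section NatTransId.

Variables (C : Category) (F : Functor C C) (sigma : forall A : C, Hom A (F A)).
Hypothesis Hnat : nat_trans_id sigma.

Lemma nat_trans_id_unique (A B : C) (mu : Hom A B) (nu : Hom (F A) (F B)) :
  epimorphism (sigma A) ->
  comp (sigma B) mu = comp nu (sigma A) -> nu = fmap F mu.
Proof.
  intros Hepi Hnu. apply Hepi. rewrite <- Hnu. apply Hnat.
Qed.

Lemma smap_nat_trans_id (Q : SetFunctor C) (A B : C) (mu : Hom A B) (a : Q A) :
  smap Q (fmap F mu) (smap Q (sigma A) a) = smap Q (sigma B) (smap Q mu a).
Proof.
  rewrite <- !smap_comp, Hnat. reflexivity.
Qed.

End NatTransId.

Theorem lemma1 (C : Category) (Q : SetFunctor C) (HQ : faithful Q)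
  (Phi : Functor C C) (HPhi : automorphism Phi)
  (sigma : forall A : C, Hom A (Phi A))
  (Hnat : nat_trans_id sigma)
  (Hbi : forall A : C, bimorphism (sigma A)) :
  (forall (A B : C) (mu : Hom A B) (nu : Hom (Phi A) (Phi B)),
      comp (sigma B) mu = comp nu (sigma A) -> nu = fmap Phi mu) /\
  (forall (A B : C) (mu : Hom A B),
      (forall a : Q A, smap Q (fmap Phi mu) (smap Q (sigma A) a)
                       = smap Q (sigma B) (smap Q mu a)) /\
      (forall nu : Hom (Phi A) (Phi B),
         (forall a : Q A, smap Q nu (smap Q (sigma A) a)
                          = smap Q (sigma B) (smap Q mu a)) ->
         nu = fmap Phi mu)).
Proof.
  assert (Hunique : forall (A B : C) (mu : Hom A B) (nu : Hom (Phi A) (Phi B)),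
             comp (sigma B) mu = comp nu (sigma A) -> nu = fmap Phi mu).
  { intros A B mu nu. apply nat_trans_id_unique; [exact Hnat | apply Hbi]. }
  split; [exact Hunique |].
  intros A B mu. split.
  - intros a. apply smap_nat_trans_id, Hnat.
  - intros nu Hnu. apply Hunique, (faithful_comp_eq HQ).
    intros a. symmetry. apply Hnu.
Qed.
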